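(* Let $q\in\mathbb{C}$ with $|q|>1$, put $\varepsilon=1-q$, and let $a_1,a_2,b_1,b_2$ be nonzero complex parameters. Let $x_1(t),x_2(t),y_1(t),y_2(t)$ be functions of $t$ (such that all denominators below are nonzero) and define the $4\times4$ matrices \[ M_4(z,t)=\begin{bmatrix}a_1&y_1(t)-\frac{y_2(t)}{qt}&-1&0\\0&b_1&x_2(t)-x_1(t)&-1\\-tz&0&a_2&y_2(t)-y_1(t)\\(x_1(t)-tx_2(t))z&-z&0&b_2\end{bmatrix}, \] \[ B_4(z,t)=\begin{bmatrix}\frac{qta_1}{qt+x_1(qt)y_2(t)}&y_1(t)&-1&0\\0&1+x_1(qt)y_1(t)&-x_1(qt)&0\\-tz&0&\frac{a_2}{1+x_2(qt)y_1(t)}&y_2(t)\\-tx_2(qt)z&0&0&1+x_2(qt)y_2(t)\end{bmatrix}. \] Set $M_4^*(z,t)=\frac{1}{qa_1}M_4(z,t)$ and $B_4^*(z,t)=\frac{qt+x_1(qt)y_2(t)}{qta_1}B_4(z,t)$, and write $M_4^*(z,t)=M_{4,0}^*(t)+zM_{4,1}^*(t)$, $B_4^*(z,t)=B_{4,0}^*(t)+zB_{4,1}^*(t)$ with $M_{4,0}^*,M_{4,1}^*,B_{4,0}^*,B_{4,1}^*$ independent of $z$. For $\zeta$ such that $q^{-1}\varepsilon\zeta I+M_{4,1}^*(t)$ is invertible, define \[ N_4(\zeta,t)=\left(q^{-1}\varepsilon\zeta I+M_{4,1}^*(t)\right)^{-1}\left(\varepsilon\zeta M_{4,0}^*(t)+M_{4,1}^*(t)\right),\qquad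 C_4(\zeta,t)=B_{4,0}^*(t)+\varepsilon^{-1}\zeta^{-1}B_{4,1}^*(t)\left(I-N_4(\zeta,t)\right). \] Then the first column of each of the matrices $N_4(\zeta,t)$ and $C_4(\zeta,t)$ equals the fundamental vector ${}^t[1,0,0,0]$.
   Context: $I$ denotes the $4\times 4$ identity matrix. The matrices $M_4$, $B_4$ form the Lax pair $\Psi_4(qz,t)=M_4(z,t)\Psi_4(z,t)$, $\Psi_4(z,qt)=B_4(z,t)\Psi_4(z,t)$ whose compatibility condition is the paper's system $q$-$P_{(2,2)}$; the matrices $N_4,C_4$ arise from it by a $q$-Laplace transformation. *)

(* Complex numbers are modelled as R[i] = complex R for an
   arbitrary real closed field R (R = the real numbers gives C). *)
From HB Require Import structures.
From mathcomp Require Import all_boot all_order all_algebra.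
From mathcomp Require Export complex.
Set Implicit Arguments. Unset Strict Implicit. Unset Printing Implicit Defensive.
Import Order.TTheory GRing.Theory Num.Theory.
Local Open Scope ring_scope.

Section Defs.
Variable C : numClosedFieldType.

Definition mx4 (r0 r1 r2 r3 : seq C) : 'M[C]_4 :=
  \matrix_(i < 4, j < 4) nth 0 (nth [::] [:: r0; r1; r2; r3] i) j.

Variables (q a1 a2 b1 b2 : C) (x1 x2 y1 y2 : C -> C).

Definition eps : C := 1 - q.

Definition M4 (z t : C) : 'M[C]_4 := mx4
  [:: a1; y1 t - y2 t / (q * t); -1; 0]
  [:: 0; b1; x2 t - x1 t; -1]
  [:: - (t * z); 0; a2; y2 t - y1 t]
  [:: (x1 t - t * x2 t) * z; - z; 0; b2].

Definition B4 (z t : C) : 'M[C]_4 := mx4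
  [:: q * t * a1 / (q * t + x1 (q * t) * y2 t); y1 t; -1; 0]
  [:: 0; 1 + x1 (q * t) * y1 t; - x1 (q * t); 0]
  [:: - (t * z); 0; a2 / (1 + x2 (q * t) * y1 t); y2 t]
  [:: - (t * x2 (q * t) * z); 0; 0; 1 + x2 (q * t) * y2 t].

Definition M4s (z t : C) : 'M[C]_4 := (q * a1)^-1 *: M4 z t.
Definition B4s (z t : C) : 'M[C]_4 :=
  ((q * t + x1 (q * t) * y2 t) / (q * t * a1)) *: B4 z t.

(* z-coefficients: M4s and B4s are affine in z *)
Definition M4s0 (t : C) : 'M[C]_4 := M4s 0 t.
Definition M4s1 (t : C) : 'M[C]_4 := M4s 1 t - M4s 0 t.
Definition B4s0 (t : C) : 'M[C]_4 := B4s 0 t.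
Definition B4s1 (t : C) : 'M[C]_4 := B4s 1 t - B4s 0 t.

Definition N4 (zeta t : C) : 'M[C]_4 :=
  invmx ((q^-1 * eps * zeta)%:M + M4s1 t) *m (eps * zeta *: M4s0 t + M4s1 t).

Definition C4 (zeta t : C) : 'M[C]_4 :=
  B4s0 t + (eps^-1 * zeta^-1) *: (B4s1 t *m (1%:M - N4 zeta t)).

End Defs.

Definition e1 (C : numClosedFieldType) : 'cV[C]_4 := delta_mx 0 0.

From HB Require Import structures.
From mathcomp Require Import all_boot all_order all_algebra.
From mathcomp Require Import complex.
From mathcomp Require Import ring.
Import Order.TTheory GRing.Theory Num.Theory.
Local Open Scope ring_scope.

(* Since the first column of M4s0 is q^-1 e1, the numerator of N4 and the
   inverted matrix share their first column, so N4 fixes e1.  Hence I - N4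
   kills e1, the correction term of C4 drops out of its first column, and what
   remains is the first column of B4s0, normalised to e1 by the prefactor. *)

Section ColumnAlgebra.
Variables (F : fieldType) (n : nat).
Implicit Types A B C N X : 'M[F]_n.

Lemma col_invmx_mul A X j :
  A \in unitmx -> col j X = col j A -> col j (invmx A *m X) = delta_mx j 0.
Proof.
by move=> Aunit eqXA; rewrite colE -mulmxA -colE eqXA colE mulmxA mulVmx // mul1mx.
Qed.

Lemma col_add_scale_mul_subr1 C B N (c : F) j :
  col j N = delta_mx j 0 -> col j (C + c *: (B *m (1%:M - N))) = col j C.
Proof.
move=> Nj; have killed : (1%:M - N) *m delta_mx j 0 = 0 :> 'cV_n.
  by rewrite mulmxBl mul1mx -colE Nj subrr.
by rewrite colE mulmxDl -scalemxAl -mulmxA killed mulmx0 scaler0 addr0 -colE.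
Qed.

End ColumnAlgebra.

Section FirstColumns.
Variables (C : numClosedFieldType) (q a1 a2 b1 b2 : C) (x1 x2 y1 y2 : C -> C).
Hypotheses (q_neq0 : q != 0) (a1_neq0 : a1 != 0).

Lemma col0_M4s0 t : col 0 (M4s0 q a1 a2 b1 b2 x1 x2 y1 y2 t) = q^-1 *: e1 C.
Proof.
apply/matrixP => i j; rewrite (ord1 j).
case: i => [[|[|[|[|i]]]] Hi] //; rewrite !mxE /= ?mulr1n ?mulr0n.
- by field; rewrite q_neq0 a1_neq0.
all: by rewrite !(mulr0, oppr0).
Qed.

Lemma col0_numerN4 t zeta :
  col 0 (eps q * zeta *: M4s0 q a1 a2 b1 b2 x1 x2 y1 y2 t
         + M4s1 q a1 a2 b1 b2 x1 x2 y1 y2 t)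
  = col 0 ((q^-1 * eps q * zeta)%:M + M4s1 q a1 a2 b1 b2 x1 x2 y1 y2 t).
Proof.
rewrite [LHS]linearD [RHS]linearD /=; congr (_ + _).
rewrite -scalemx1 [LHS]linearZ [RHS]linearZ /= col0_M4s0 scalerA colE mul1mx.
by rewrite [q^-1 * _]mulrC mulrAC.
Qed.

Lemma col0_B4s0 t :
  t != 0 -> q * t + x1 (q * t) * y2 t != 0 ->
  col 0 (B4s0 q a1 a2 x1 x2 y1 y2 t) = e1 C.
Proof.
move=> t_neq0 den_neq0; apply/matrixP => i j; rewrite (ord1 j).
case: i => [[|[|[|[|i]]]] Hi] //; rewrite !mxE /= ?mulr1n ?mulr0n.
- by field; rewrite den_neq0 t_neq0 a1_neq0 q_neq0.
all: by rewrite !(mulr0, oppr0).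
Qed.

End FirstColumns.

Theorem mainTheorem1 (R : rcfType) (q a1 a2 b1 b2 : R[i]) (x1 x2 y1 y2 : R[i] -> R[i])
  (t zeta : R[i])
  (hq : 1 < `|q|)
  (ha1 : a1 != 0) (ha2 : a2 != 0) (hb1 : b1 != 0) (hb2 : b2 != 0)
  (ht : t != 0)
  (hden1 : q * t + x1 (q * t) * y2 t != 0)
  (hden2 : 1 + x2 (q * t) * y1 t != 0)
  (hzeta : zeta != 0)
  (hinv : (q^-1 * eps q * zeta)%:M + M4s1 q a1 a2 b1 b2 x1 x2 y1 y2 t \in unitmx) :
  col 0 (N4 q a1 a2 b1 b2 x1 x2 y1 y2 zeta t) = e1 _ /\
  col 0 (C4 q a1 a2 b1 b2 x1 x2 y1 y2 zeta t) = e1 _.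
Proof.
have q_neq0 : q != 0 by apply: contraTneq hq => ->; rewrite normr0 ltr10.
have N4e1 : col 0 (N4 q a1 a2 b1 b2 x1 x2 y1 y2 zeta t) = e1 _.
  by rewrite /N4 col_invmx_mul //; apply: col0_numerN4.
split=> //.
by rewrite /C4 col_add_scale_mul_subr1 // col0_B4s0.
Qed.
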